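(* There is an absolute constant $C>0$ such that the following holds. Let $K\ge1$, let $\mathbf{\Phi}\in\mathbb{R}^{m\times n}$ satisfy the RIP of order $2K$ with $\delta_{2K}\in(0,1)$, let $\mathbf{x}\in\mathbb{R}^n$ have exactly $K$ nonzero entries, all of equal magnitude, let $\mathbf{v}\in\mathbb{R}^m$, and $\mathbf{y}=\mathbf{\Phi}\mathbf{x}+\mathbf{v}$. If $\mathrm{SNR}\ge\delta_{2K}^{-3/2}$, then the support $\mathcal{T}^K$ output by OMP after $K$ iterations satisfies $\frac{|\mathcal{T}^K\setminus\mathrm{supp}(\mathbf{x})|}{K} \le C\,\delta_{2K}^{1/2}$.
   Context: $\phi_i$ is the $i$-th column of $\mathbf{\Phi}$. RIP: for an integer $s\ge1$, the isometry constant $\delta_s$ of $\mathbf{\Phi}$ is the smallest $c\in[0,1)$ such that $(1-c)\|\mathbf{z}\|_2^2 \le \|\mathbf{\Phi}\mathbf{z}\|_2^2 \le (1+c)\|\mathbf{z}\|_2^2$ for all $s$-sparse $\mathbf{z}$. $\mathrm{SNR} := \|\mathbf{\Phi}\mathbf{x}\|_2^2/\|\mathbf{v}\|_2^2$. OMP with input $\mathbf{\Phi},\mathbf{y},K$: set $\mathcal{T}^0=\emptyset$, $\mathbf{r}^0=\mathbf{y}$; for $k=1,\dots,K$: choose $t^k \in \arg\max_{i\notin\mathcal{T}^{k-1}} |\langle\phi_i,\mathbf{r}^{k-1}\rangle|$ (ties broken arbitrarily), set $\mathcal{T}^k=\mathcal{T}^{k-1}\cup\{t^k\}$, $\mathbf{x}^k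 = \arg\min_{\mathrm{supp}(\mathbf{u})\subseteq\mathcal{T}^k}\|\mathbf{y}-\mathbf{\Phi}\mathbf{u}\|_2$, $\mathbf{r}^k=\mathbf{y}-\mathbf{\Phi}\mathbf{x}^k$. Output $\mathcal{T}^K$, $\mathbf{x}^K$. *)

(* R is an arbitrary real closed field (standing for the reals). *)
From HB Require Import structures.
From mathcomp Require Import all_boot all_order all_algebra.
Set Implicit Arguments. Unset Strict Implicit. Unset Printing Implicit Defensive.
Import Order.TTheory GRing.Theory Num.Theory.
Local Open Scope ring_scope.

Section OMPDefs.
Variable R : rcfType.

Definition norm2sq (m : nat) (z : 'cV[R]_m) : R := \sum_(i < m) (z i 0) ^+ 2.

Definition supp (n : nat) (z : 'cV[R]_n) : {set 'I_n} := [set i | z i 0 != 0].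

Definition sparse (n s : nat) (z : 'cV[R]_n) : Prop := (#|supp z| <= s)%N.

Definition rip_ineq (m n : nat) (Phi : 'M[R]_(m, n)) (s : nat) (c : R) : Prop :=
  forall z : 'cV[R]_n, sparse s z ->
    (1 - c) * norm2sq z <= norm2sq (Phi *m z) /\
    norm2sq (Phi *m z) <= (1 + c) * norm2sq z.

Definition is_isometry_const (m n : nat) (Phi : 'M[R]_(m, n)) (s : nat) (d : R) : Prop :=
  0 <= d < 1 /\ rip_ineq Phi s d /\
  forall c : R, 0 <= c < 1 -> rip_ineq Phi s c -> d <= c.

Definition corr (m n : nat) (Phi : 'M[R]_(m, n)) (i : 'I_n) (r : 'cV[R]_m) : R :=
  \sum_(j < m) Phi j i * r j 0.

Definition ls_min (m n : nat) (Phi : 'M[R]_(m, n)) (y : 'cV[R]_m)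
    (S : {set 'I_n}) (u : 'cV[R]_n) : Prop :=
  (forall i, i \notin S -> u i 0 = 0) /\
  forall w : 'cV[R]_n, (forall i, i \notin S -> w i 0 = 0) ->
    norm2sq (y - Phi *m u) <= norm2sq (y - Phi *m w).

(* T = [:: t^1; ...; t^K] is the list of indices chosen by some run of OMP
   (ties broken arbitrarily) on input Phi, y, K.  At step k+1, T^k is the set of
   the first k chosen indices, x^k a least-squares solution on T^k and r^k = y - Phi x^k. *)
Definition omp_run (m n : nat) (Phi : 'M[R]_(m, n)) (y : 'cV[R]_m) (K : nat)
    (T : seq 'I_n) : Prop :=
  size T = K /\
  forall k : nat, (k < K)%N ->
    exists xk : 'cV[R]_n,
      ls_min Phi y [set i in take k T] xk /\
      forall t0 : 'I_n, let t := nth t0 T k in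
        t \notin take k T /\
        forall i : 'I_n, i \notin take k T ->
          `|corr Phi i (y - Phi *m xk)| <= `|corr Phi t (y - Phi *m xk)|.

End OMPDefs.

From HB Require Import structures.
From mathcomp Require Import all_boot all_order all_algebra.
From mathcomp Require Import ring lra.
Import Order.TTheory GRing.Theory Num.Theory.
Set Implicit Arguments. Unset Strict Implicit. Unset Printing Implicit Defensive.
Local Open Scope ring_scope.

(* At step [k+1] OMP picks the column most correlated with the residual
   [r^k = Phi (x - x^k) + v].  As [r^k] is orthogonal to the columns already
   chosen, correlating it with [x - x^k], which agrees with [x] on the at least
   [K - k] support indices not yet found, shows by the RIP and the SNR bound
   that the squared top correlation is at least
   [a^2 (1 - O(sqrt delta) sqrt (K / (K - k)))], [a] being the common magnitude
   of the entries of [x]; each step lowers the squared residual by about that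
   much.  Since [sum_k (K - k)^(-1/2) <= 2 sqrt K], the final residual is at
   most [|y|^2 - (1 - O(sqrt delta)) K a^2], while each support index missed by
   OMP contributes [a^2] to it up to [O(sqrt delta) K a^2].  So OMP misses at
   most [20 sqrt delta K] indices, and picks at most as many wrong ones. *)

Section InnerProduct.
Variable R : rcfType.
Implicit Types (m : nat) (k t : R).

Definition dot m (a b : 'cV[R]_m) : R := \sum_(j < m) a j 0 * b j 0.

Lemma norm2sqE m (a : 'cV[R]_m) : norm2sq a = dot a a.
Proof. by apply: eq_bigr => j _; rewrite expr2. Qed.

Lemma norm2sq_ge0 m (a : 'cV[R]_m) : 0 <= norm2sq a.
Proof. by apply: sumr_ge0 => j _; apply: sqr_ge0. Qed.

Lemma dotC m (a b : 'cV[R]_m) : dot a b = dot b a.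
Proof. by apply: eq_bigr => j _; rewrite mulrC. Qed.

Lemma dotDl m (a b c : 'cV[R]_m) : dot (a + b) c = dot a c + dot b c.
Proof. by rewrite /dot -big_split; apply: eq_bigr => j _; rewrite !mxE mulrDl. Qed.

Lemma dotZl m k (a c : 'cV[R]_m) : dot (k *: a) c = k * dot a c.
Proof. by rewrite /dot mulr_sumr; apply: eq_bigr => j _; rewrite !mxE mulrA. Qed.

Lemma norm2sqD m (a b : 'cV[R]_m) :
  norm2sq (a + b) = norm2sq a + 2 * dot a b + norm2sq b.
Proof.
rewrite !norm2sqE dotDl dotC dotDl (dotC b a) [dot b (a + b)]dotC dotDl (dotC a b).
ring.
Qed.

Lemma norm2sqZ m k (a : 'cV[R]_m) : norm2sq (k *: a) = k ^+ 2 * norm2sq a.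
Proof. by rewrite !norm2sqE dotZl dotC dotZl; ring. Qed.

Lemma norm2sqB m (a b : 'cV[R]_m) :
  norm2sq (a - b) = norm2sq a - 2 * dot b a + norm2sq b.
Proof.
rewrite norm2sqD -scaleN1r norm2sqZ dotC dotZl.
by rewrite -[norm2sq b]mul1r sqrrN expr1n; ring.
Qed.

(* Expand [0 <= |t a + b|^2] and divide by [t]. *)
Lemma dot_ge_amgm m (a b : 'cV[R]_m) t : 0 < t ->
  - (t * norm2sq a + norm2sq b / t) <= 2 * dot a b.
Proof.
move=> t_gt0; have := norm2sq_ge0 (t *: a + b).
rewrite norm2sqD norm2sqZ dotZl => h.
have -> : 2 * dot a b = (t ^+ 2 * norm2sq a + 2 * (t * dot a b) + norm2sq b) / t
                        - (t * norm2sq a + norm2sq b / t).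
  by field; rewrite gt_eqF.
by rewrite lerDr divr_ge0 // ltW.
Qed.

Lemma dot_le_amgm m (a b : 'cV[R]_m) t : 0 < t ->
  2 * dot a b <= t * norm2sq a + norm2sq b / t.
Proof.
move=> t_gt0; have := dot_ge_amgm a (- b) t_gt0.
rewrite -scaleN1r norm2sqZ dotC dotZl dotC sqrrN expr1n mul1r mulN1r; lra.
Qed.

Lemma norm2sqD_ge m (a b : 'cV[R]_m) t : 0 < t ->
  (1 - t) * norm2sq a - norm2sq b / t <= norm2sq (a + b).
Proof.
move=> t_gt0; have := dot_ge_amgm a b t_gt0; have := norm2sq_ge0 b.
rewrite norm2sqD; lra.
Qed.

Lemma norm2sqD_le m (a b : 'cV[R]_m) t : 0 < t ->
  norm2sq (a + b) <= (1 + t) * norm2sq a + (1 + t^-1) * norm2sq b.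
Proof.
move=> t_gt0; have := dot_le_amgm a b t_gt0.
by rewrite norm2sqD mulrDl mulrDl mul1r mul1r (mulrC _ (norm2sq b)); lra.
Qed.

Lemma norm2sq_sub_dot_le m (r a : 'cV[R]_m) (D : R) : 0 < D -> norm2sq a <= D ->
  norm2sq (r - (dot a r / D) *: a) <= norm2sq r - dot a r ^+ 2 / D.
Proof.
move=> D_gt0 aD; rewrite norm2sqB norm2sqZ dotZl.
have : (dot a r / D) ^+ 2 * norm2sq a <= (dot a r / D) ^+ 2 * D.
  by rewrite ler_wpM2l // sqr_ge0.
have -> : (dot a r / D) ^+ 2 * D = dot a r ^+ 2 / D by field; rewrite gt_eqF.
have -> : dot a r / D * dot a r = dot a r ^+ 2 / D by rewrite expr2 mulrAC.
lra.
Qed.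

Lemma norm2sq_delta n (i : 'I_n) : norm2sq (delta_mx i 0 : 'cV[R]_n) = 1.
Proof.
rewrite /norm2sq (bigD1 i) //= big1 => [|j /negbTE ji]; last by rewrite !mxE ji expr0n.
by rewrite !mxE !eqxx expr1n addr0.
Qed.

Lemma corrE m n (Phi : 'M[R]_(m, n)) i r : corr Phi i r = dot (Phi *m delta_mx i 0) r.
Proof. by rewrite /corr /dot -colE; apply: eq_bigr => j _; rewrite !mxE. Qed.

Lemma dot_mulmx_corr m n (Phi : 'M[R]_(m, n)) (z : 'cV[R]_n) r :
  dot (Phi *m z) r = \sum_i z i 0 * corr Phi i r.
Proof.
rewrite /dot /corr; under [RHS]eq_bigr => i _ do rewrite mulr_sumr.
rewrite exchange_big /=; apply: eq_bigr => j _.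
by rewrite !mxE mulr_suml; apply: eq_bigr => i _; rewrite mulrA (mulrC (z i 0)).
Qed.

End InnerProduct.

Lemma lin_le_quad_eq0 (R : realFieldType) (c N : R) :
  0 <= N -> (forall e, 2 * (e * c) <= e ^+ 2 * N) -> c = 0.
Proof.
move=> N_ge0 quad; apply/eqP; rewrite -sqrf_eq0 eq_le sqr_ge0 andbT.
set h := (N + 1)^-1.
have h_gt0 : 0 < h by rewrite invr_gt0; lra.
have hN : h * N < 1 by rewrite mulrC ltr_pdivrMr; lra.
have := quad (c * h).
have -> : (c * h) ^+ 2 * N = c ^+ 2 * h * (h * N) by ring.
have -> : 2 * (c * h * c) = 2 * (c ^+ 2 * h) by ring.
move=> H; have ch_ge0 : 0 <= c ^+ 2 * h by rewrite mulr_ge0 ?sqr_ge0 ?ltW.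
have : c ^+ 2 * h * (h * N) <= c ^+ 2 * h by rewrite ler_piMr // ltW.
by move=> ?; rewrite -(pmulr_lle0 _ h_gt0); lra.
Qed.

Section LeastSquares.
Variables (R : rcfType) (m n : nat) (Phi : 'M[R]_(m, n)) (y : 'cV[R]_m).

Lemma ls_min_corr (S : {set 'I_n}) u i :
  ls_min Phi y S u -> i \in S -> corr Phi i (y - Phi *m u) = 0.
Proof.
move=> [u_supp u_min] iS.
apply: (lin_le_quad_eq0 (norm2sq_ge0 (Phi *m delta_mx i 0))) => e.
have supp_e : forall j, j \notin S -> (u + e *: delta_mx i 0) j 0 = 0.
  move=> j jS; rewrite !mxE u_supp // add0r.
  by rewrite (_ : j == i = false) ?mulr0 //; apply: contraNF jS => /eqP ->.
have := u_min _ supp_e.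
rewrite mulmxDr -scalemxAr opprD addrA [X in _ <= X]norm2sqB norm2sqZ dotZl -corrE.
lra.
Qed.

End LeastSquares.

Lemma sum_inv_sqrt_le (R : rcfType) (K : nat) :
  \sum_(j < K) (Num.sqrt (K - j)%:R : R)^-1 <= 2 * Num.sqrt K%:R.
Proof.
elim: K => [|K IH]; first by rewrite big_ord0 sqrtr0 mulr0.
rewrite big_ord_recl subn0; under eq_bigr => j _ do rewrite lift0 subSS.
set a : R := Num.sqrt K%:R in IH *; set b : R := Num.sqrt K.+1%:R.
have b_gt0 : 0 < b by rewrite sqrtr_gt0 ltr0n.
have sqr_b : b ^+ 2 = a ^+ 2 + 1 by rewrite !sqr_sqrtr ?ler0n // -natr1.
(* [2 b^2 - 2 a b - 1 = (b - a)^2] once [b^2 = a^2 + 1] *)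
have : b^-1 <= 2 * b - 2 * a.
  rewrite -[b^-1]mul1r ler_pdivrMr //; have := sqr_ge0 (b - a); nra.
lra.
Qed.

Lemma sqr_ge_of_mul_le (R : realFieldType) (a p M : R) :
  0 <= a -> 0 <= M -> a * p <= M -> a ^+ 2 * (2 * p - 1) <= M ^+ 2.
Proof.
move=> a_ge0 M_ge0 apM; have a2_ge0 := sqr_ge0 a.
have : a ^+ 2 * (2 * p - 1) <= a ^+ 2 * p ^+ 2.
  by rewrite ler_wpM2l //; have := sqr_ge0 (p - 1); lra.
case: (lerP 0 p) => [p_ge0|p_lt0].
  have : (a * p) ^+ 2 <= M ^+ 2 by rewrite ler_sqr ?nnegrE ?mulr_ge0.
  by rewrite exprMn; lra.
by move=> _; apply: le_trans (sqr_ge0 M); rewrite mulr_ge0_le0 //; lra.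
Qed.

(* In use, [N + d] is the correlation of the residual with the unrecovered
   part of the signal, [N] its noiseless part, [V] the noise energy and [M]
   the largest correlation. *)
Lemma mul_le_max_corr (R : realFieldType) (s t g a N d V M : R) :
  0 < s -> 0 < t -> 0 < a -> 1 <= g -> 0 <= M ->
  (1 - s) * g * a ^+ 2 <= N -> V <= 2 * t ^+ 2 * g * a ^+ 2 ->
  - (t * N + V / t) <= 2 * d -> N + d <= g * a * M ->
  a * (1 - s - 3 / 2 * t) <= M.
Proof.
move=> s_gt0 t_gt0 a_gt0 g_ge1 M_ge0 N_ge V_le amgm corr_le.
case: (lerP (1 - s - 3 / 2 * t) 0) => [p_le0|p_gt0].
  by apply: le_trans M_ge0; rewrite pmulr_rle0.
have ga2_gt0 : 0 < g * a ^+ 2 by rewrite mulr_gt0 ?exprn_gt0 //; lra.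
have Vt_le : V / t <= 2 * t * (g * a ^+ 2).
  by rewrite ler_pdivrMr //; have -> : 2 * t * (g * a ^+ 2) * t = 2 * t ^+ 2 * g * a ^+ 2 by ring.
have N_ge' : (1 - s) * (g * a ^+ 2) * (1 - t / 2) <= N * (1 - t / 2).
  by apply: ler_wpM2r; [lra | rewrite mulrA].
have st_ge0 : 0 <= g * a ^+ 2 * (s * t) by apply/mulr_ge0/mulr_ge0; apply: ltW.
have : (g * a) * (a * (1 - s - 3 / 2 * t)) <= (g * a) * M.
  have -> : g * a * (a * (1 - s - 3 / 2 * t)) = g * a ^+ 2 * (1 - s - 3 / 2 * t) by ring.
  have : (1 - s) * (g * a ^+ 2) * (1 - t / 2) =
    g * a ^+ 2 * (1 - s - 1 / 2 * t) + g * a ^+ 2 * (s * t) / 2 by ring.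
  lra.
by rewrite ler_pM2l // mulr_gt0 //; lra.
Qed.

Section Support.
Variables (R : rcfType) (n : nat).
Implicit Types (z : 'cV[R]_n) (U : {set 'I_n}).

Lemma notin_supp z i : i \notin supp z -> z i 0 = 0.
Proof. by rewrite inE negbK => /eqP. Qed.

Lemma sparse_supported z U s :
  (forall i, i \notin U -> z i 0 = 0) -> (#|U| <= s)%N -> sparse s z.
Proof.
move=> z_supp cardU; apply: leq_trans cardU; apply/subset_leq_card/subsetP => i.
by rewrite inE; apply: contraR => /z_supp ->.
Qed.

End Support.

Section OMPSupportRecovery.
Variables (R : rcfType) (m n K : nat) (Phi : 'M[R]_(m, n)) (delta a : R).
Variables (x : 'cV[R]_n) (v : 'cV[R]_m).
Hypothesis rip : rip_ineq Phi (2 * K) delta.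
Hypothesis delta_gt0 : 0 < delta.
Hypothesis delta_lt1 : delta < 1.
Hypothesis a_gt0 : 0 < a.
Hypothesis card_supp_x : #|supp x| = K.
Hypothesis abs_x : forall i, i \in supp x -> `|x i 0| = a.
Hypothesis snr : (delta * Num.sqrt delta)^-1 * norm2sq v <= norm2sq (Phi *m x).

Local Notation s := (Num.sqrt delta).
Local Notation y := (Phi *m x + v).

Let s_gt0 : 0 < s. Proof. by rewrite sqrtr_gt0. Qed.
Let sqr_s : s ^+ 2 = delta. Proof. by rewrite sqr_sqrtr // ltW. Qed.
Let s_lt1 : s < 1. Proof. by rewrite -sqrtr1 ltr_sqrt. Qed.
Let delta_le_s : delta <= s.
Proof. by rewrite -{1}sqr_s expr2 ler_piMr // ltW. Qed.

Let rip_lb z : sparse (2 * K) z -> (1 - delta) * norm2sq z <= norm2sq (Phi *m z).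
Proof. by case/rip. Qed.

Let rip_ub z : sparse (2 * K) z -> norm2sq (Phi *m z) <= (1 + delta) * norm2sq z.
Proof. by case/rip. Qed.

Lemma sqr_x i : x i 0 ^+ 2 = if i \in supp x then a ^+ 2 else 0.
Proof.
case: ifP => [/abs_x <-|/negbT/notin_supp ->]; last by rewrite expr0n.
by rewrite real_normK ?num_real.
Qed.

Lemma norm2sq_x : norm2sq x = K%:R * a ^+ 2.
Proof.
rewrite /norm2sq; under eq_bigr do rewrite sqr_x.
by rewrite -big_mkcond sumr_const card_supp_x mulr_natl.
Qed.

Lemma norm2sq_ge_agree (z : 'cV[R]_n) (B : {set 'I_n}) :
  B \subset supp x -> (forall i, i \in B -> z i 0 = x i 0) ->
  #|B|%:R * a ^+ 2 <= norm2sq z.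
Proof.
move=> BS zB.
have -> : #|B|%:R * a ^+ 2 = \sum_(i < n) (if i \in B then a ^+ 2 else 0).
  by rewrite -big_mkcond sumr_const mulr_natl.
apply: ler_sum => i _.
case: ifP => [iB|_]; last exact: sqr_ge0.
by rewrite zB // sqr_x (subsetP BS).
Qed.

Lemma sparse_x_sub (u : 'cV[R]_n) (U : {set 'I_n}) :
  (forall i, i \notin U -> u i 0 = 0) -> (#|U| <= K)%N -> sparse (2 * K) (x - u).
Proof.
move=> u_supp cardU; apply: (@sparse_supported _ _ _ (supp x :|: U)).
  move=> i; rewrite inE negb_or => /andP[iS iU].
  by rewrite !mxE u_supp // notin_supp // subr0.
apply: leq_trans (_ : #|supp x| + #|U| <= 2 * K)%N; first by rewrite cardsU leq_subr.
by rewrite card_supp_x mul2n -addnn leq_add2l.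
Qed.

Lemma norm2sq_Phix_le : norm2sq (Phi *m x) <= (1 + delta) * (K%:R * a ^+ 2).
Proof. by rewrite -norm2sq_x rip_ub // /sparse card_supp_x leq_pmull. Qed.

Lemma noise_le : norm2sq v <= s ^+ 3 * norm2sq (Phi *m x).
Proof.
by rewrite exprSr sqr_s -ler_pdivrMl ?mulr_gt0.
Qed.

Lemma noise_le_signal : norm2sq v <= 2 * s ^+ 3 * (K%:R * a ^+ 2).
Proof.
have KA_ge0 : 0 <= K%:R * a ^+ 2 by rewrite mulr_ge0 ?sqr_ge0.
apply: le_trans noise_le _.
have -> : 2 * s ^+ 3 * (K%:R * a ^+ 2) = s ^+ 3 * (2 * (K%:R * a ^+ 2)) by ring.
apply: ler_wpM2l; first exact/ltW/exprn_gt0.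
apply: le_trans norm2sq_Phix_le _; apply: ler_wpM2r => //.
by have := delta_lt1; lra.
Qed.


Let q (j : nat) : R := Num.sqrt K%:R / Num.sqrt (K - j)%:R.

(* The lower bound on the squared correlation picked at step [j] of OMP, in
   units of [a^2]. *)
Let gain (j : nat) : R := 1 - 2 * s - 3 * (s * q j).

Let q_gt0 k : (k < K)%N -> 0 < q k.
Proof.
by move=> kK; rewrite divr_gt0 ?sqrtr_gt0 ?ltr0n ?subn_gt0 //; apply: leq_ltn_trans kK.
Qed.

Let K_le_sqr_q k g : (k < K)%N -> (K - k)%:R <= g -> K%:R <= q k ^+ 2 * g.
Proof.
move=> kK Kk_le_g; have Kk_gt0 : (0 : R) < (K - k)%:R by rewrite ltr0n subn_gt0.
rewrite /q exprMn exprVn !sqr_sqrtr ?ler0n //.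
apply: le_trans (_ : K%:R / (K - k)%:R * (K - k)%:R <= _); first by rewrite divfK ?gt_eqF.
by apply: ler_wpM2l => //; rewrite divr_ge0 ?ler0n.
Qed.

Lemma sum_mul_corr_le (U : {set 'I_n}) u t :
  ls_min Phi y U u ->
  (forall i, i \notin U -> `|corr Phi i (y - Phi *m u)| <= `|corr Phi t (y - Phi *m u)|) ->
  \sum_i (x - u) i 0 * corr Phi i (y - Phi *m u) <=
    #|supp x :\: U|%:R * a * `|corr Phi t (y - Phi *m u)|.
Proof.
move=> u_ls t_max; have [u_supp _] := u_ls.
set r := y - Phi *m u; set c := corr Phi t r.
have ac_ge0 : 0 <= a * `|c| by rewrite mulr_ge0 ?normr_ge0 ?ltW.
have -> : #|supp x :\: U|%:R * a * `|c| =
    \sum_i (if i \in supp x :\: U then a * `|c| else 0).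
  by rewrite -big_mkcond sumr_const -mulrA mulr_natl.
apply: ler_sum => i _; case: (boolP (i \in U)) => iU.
  by rewrite (ls_min_corr u_ls iU) mulr0; case: ifP.
have xu_i : (x - u) i 0 = x i 0 by rewrite !mxE u_supp // subr0.
case: (boolP (i \in supp x)) => iS; last by rewrite xu_i notin_supp // mul0r; case: ifP.
rewrite in_setD iU iS; apply: le_trans (ler_norm _) _.
by rewrite normrM xu_i abs_x //; apply: ler_wpM2l; [exact: ltW | exact: t_max].
Qed.

Lemma noise_le_gain k g : (k < K)%N -> (K - k)%:R <= g ->
  norm2sq v <= 2 * (s * q k) ^+ 2 * g * a ^+ 2.
Proof.
move=> kK Kk_le_g; apply: le_trans noise_le_signal _.
have -> : 2 * (s * q k) ^+ 2 * g * a ^+ 2 = 2 * s ^+ 2 * (q k ^+ 2 * g * a ^+ 2) by ring.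
have -> : 2 * s ^+ 3 * (K%:R * a ^+ 2) = 2 * s ^+ 2 * (s * (K%:R * a ^+ 2)) by ring.
apply: ler_wpM2l; first by rewrite mulr_ge0 ?sqr_ge0.
have KA_ge0 : 0 <= K%:R * a ^+ 2 by rewrite mulr_ge0 ?sqr_ge0.
apply: le_trans (ler_piMl KA_ge0 (ltW s_lt1)) _.
by apply: ler_wpM2r; rewrite ?sqr_ge0 ?K_le_sqr_q.
Qed.

(* Correlating the residual [Phi (x - u) + v] with [x - u], which agrees with
   [x] off the fitted set [U], bounds the largest correlation from below. *)
Lemma max_corr_lb k (U : {set 'I_n}) u t :
  (k < K)%N -> (#|U| <= k)%N -> ls_min Phi y U u ->
  (forall i, i \notin U -> `|corr Phi i (y - Phi *m u)| <= `|corr Phi t (y - Phi *m u)|) ->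
  a ^+ 2 * gain k <= corr Phi t (y - Phi *m u) ^+ 2.
Proof.
move=> kK cardU u_ls t_max; have corr_le := sum_mul_corr_le u_ls t_max.
have [u_supp _] := u_ls; set c := corr Phi t _ in corr_le *.
set z := x - u in corr_le; set G := supp x :\: U in corr_le.
have card_G : (K - k <= #|G|)%N.
  rewrite cardsD card_supp_x leq_sub2l // (leq_trans _ cardU) // subset_leq_card //.
  exact: subsetIr.
have z_G i : i \in G -> z i 0 = x i 0.
  by rewrite inE => /andP[iU _]; rewrite !mxE u_supp // subr0.
have corr_sum : \sum_i z i 0 * corr Phi i (y - Phi *m u) =
    norm2sq (Phi *m z) + dot (Phi *m z) v.
  by rewrite -dot_mulmx_corr /z mulmxBr addrAC dotC dotDl norm2sqE (dotC v).
rewrite corr_sum in corr_le.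
have t_gt0 : 0 < s * q k by rewrite mulr_gt0 ?q_gt0.
have g_ge1 : 1 <= #|G|%:R :> R by rewrite ler1n (leq_trans _ card_G) // subn_gt0.
have N_ge : (1 - s) * #|G|%:R * a ^+ 2 <= norm2sq (Phi *m z).
  have z_sparse := sparse_x_sub u_supp (leq_trans cardU (ltnW kK)).
  apply: le_trans (rip_lb z_sparse); rewrite -mulrA.
  have := norm2sq_ge_agree (subsetDl _ U) z_G; have := delta_le_s; have := delta_lt1.
  have : 0 <= #|G|%:R * a ^+ 2 :> R by rewrite mulr_ge0 ?sqr_ge0.
  by nra.
have Kk_le_G : (K - k)%:R <= #|G|%:R :> R by rewrite ler_nat.
have := mul_le_max_corr s_gt0 t_gt0 a_gt0 g_ge1 (normr_ge0 c) N_ge (noise_le_gain kK Kk_le_G)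
  (dot_ge_amgm _ _ t_gt0) corr_le.
move/(sqr_ge_of_mul_le (ltW a_gt0) (normr_ge0 c)); rewrite real_normK ?num_real //.
by have -> : gain k = 2 * (1 - s - 3 / 2 * (s * q k)) - 1 by rewrite /gain; field.
Qed.

Lemma sum_gain_ge : K%:R * (1 - 8 * s) <= \sum_(j < K) gain j.
Proof.
rewrite /gain sumrB sumr_const card_ord -[(1 - 2 * s) *+ K]mulr_natl.
have -> : \sum_(j < K) 3 * (s * q j) =
    3 * s * Num.sqrt K%:R * \sum_(j < K) (Num.sqrt (K - j)%:R)^-1.
  by rewrite mulr_sumr; apply: eq_bigr => j _; rewrite /q !mulrA.
have sqrtK_ge0 : 0 <= Num.sqrt K%:R :> R by apply: sqrtr_ge0.
have := ler_wpM2l (_ : 0 <= 3 * s * Num.sqrt K%:R) (sum_inv_sqrt_le R K).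
have -> : 3 * s * Num.sqrt K%:R * (2 * Num.sqrt K%:R) = 6 * s * Num.sqrt K%:R ^+ 2 by ring.
rewrite sqr_sqrtr ?ler0n // => sum_le.
by have := sum_le (mulr_ge0 (mulr_ge0 _ (ltW s_gt0)) sqrtK_ge0); lra.
Qed.

Lemma norm2sq_y_le : norm2sq y <= (1 + 7 * s) * (K%:R * a ^+ 2).
Proof.
have KA_ge0 : 0 <= K%:R * a ^+ 2 by rewrite mulr_ge0 ?sqr_ge0.
have P_le := norm2sq_Phix_le; have V_le := noise_le.
set P := norm2sq (Phi *m x) in P_le V_le *; set V := norm2sq v in V_le *.
have P_ge0 : 0 <= P := norm2sq_ge0 _.
have Vs_le : s^-1 * V <= s ^+ 2 * P.
  by rewrite ler_pdivrMl // mulrA -exprS.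
apply: le_trans (norm2sqD_le _ _ s_gt0) _; rewrite -/P -/V !mulrDl !mul1r.
have s2_le : s ^+ 2 <= s by rewrite expr2 ler_piMr // ltW.
have s3_le : s ^+ 3 <= s.
  by rewrite exprSr ler_piMl ?ltW // (le_lt_trans s2_le s_lt1).
have noise_terms_le : V + s^-1 * V <= 2 * s * P by nra.
have : (1 + 3 * s) * P <= (1 + 3 * s) * ((1 + s) * (K%:R * a ^+ 2)).
  apply: ler_wpM2l; first by have := s_gt0; lra.
  apply: le_trans P_le _; apply: ler_wpM2r => //.
  by have := delta_le_s; lra.
have := mulr_ge0 (mulr_ge0 (ltW s_gt0) (ltW s_gt0)) KA_ge0.
have := mulr_ge0 (ltW s_gt0) KA_ge0.
nra.
Qed.

Lemma residual_ge (w : 'cV[R]_n) (U : {set 'I_n}) :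
  (forall i, i \notin U -> w i 0 = 0) -> (#|U| <= K)%N ->
  #|supp x :\: U|%:R * a ^+ 2 - 4 * s * (K%:R * a ^+ 2) <= norm2sq (y - Phi *m w).
Proof.
move=> w_supp cardU; set z := x - w; set G := supp x :\: U.
have -> : y - Phi *m w = Phi *m z + v by rewrite /z mulmxBr addrAC.
have z_G i : i \in G -> z i 0 = x i 0.
  by rewrite inE => /andP[iU _]; rewrite !mxE w_supp // subr0.
have Z_ge := norm2sq_ge_agree (subsetDl _ U) z_G.
have N_ge := rip_lb (sparse_x_sub w_supp cardU).
have g_le : #|G|%:R <= K%:R :> R.
  by rewrite ler_nat -card_supp_x subset_leq_card // subsetDl.
have KA_ge0 : 0 <= K%:R * a ^+ 2 by rewrite mulr_ge0 ?sqr_ge0.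
have Vs_le : norm2sq v / s <= 2 * s * (K%:R * a ^+ 2).
  rewrite ler_pdivrMr //; apply: le_trans noise_le_signal _.
  have -> : 2 * s * (K%:R * a ^+ 2) * s = s ^+ 2 * (2 * (K%:R * a ^+ 2)) by ring.
  have -> : 2 * s ^+ 3 * (K%:R * a ^+ 2) = s ^+ 2 * (s * (2 * (K%:R * a ^+ 2))) by ring.
  apply: ler_wpM2l; rewrite ?sqr_ge0 //.
  by apply: ler_piMl; [rewrite mulr_ge0 | exact: ltW].
apply: le_trans (norm2sqD_ge _ _ s_gt0); rewrite -/G.
have gA_ge0 : 0 <= #|G|%:R * a ^+ 2 :> R by rewrite mulr_ge0 ?sqr_ge0.
have : (1 - s) * (#|G|%:R * a ^+ 2) <= norm2sq (Phi *m z).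
  by apply: le_trans N_ge; have := delta_le_s; have := delta_lt1; nra.
have : s * (#|G|%:R * a ^+ 2) <= s * (K%:R * a ^+ 2).
  by apply: ler_wpM2l; [exact: ltW | apply: ler_wpM2r; rewrite ?sqr_ge0].
have := s_lt1; have := s_gt0.
nra.
Qed.

Let norm2sq_Phi_delta_le (t : 'I_n) : (0 < K)%N ->
  norm2sq (Phi *m delta_mx t 0) <= 1 + delta.
Proof.
move=> K_gt0; apply: le_trans (rip_ub _) _; last by rewrite norm2sq_delta mulr1.
apply: (@sparse_supported _ _ _ [set t]); last by rewrite cards1 muln_gt0.
by move=> i; rewrite in_set1 !mxE => /negbTE ->.
Qed.

Let sub_s_le_inv : 1 - s <= (1 + delta)^-1.
Proof.
rewrite -[leRHS]mul1r ler_pdivlMr; last by have := delta_gt0; lra.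
by have := mulr_ge0 (ltW s_gt0) (ltW delta_gt0); have := delta_le_s; nra.
Qed.

Variable T : seq 'I_n.
Hypothesis run : omp_run Phi y K T.

(* [x^k] fits at least as well as the witness [w] for step [k]; adding to it a
   multiple of the newly chosen column lowers the residual further by the
   squared correlation over [1 + delta]. *)
Lemma omp_residual_le k : (k <= K)%N -> exists w : 'cV[R]_n,
  (forall i, i \notin take k T -> w i 0 = 0) /\
  norm2sq (y - Phi *m w) <= norm2sq y - (1 - s) * a ^+ 2 * \sum_(j < k) gain j.
Proof.
elim: k => [|k IH] kK.
  exists 0; split=> [i _|]; first by rewrite mxE.
  by rewrite mulmx0 subr0 big_ord0 mulr0 subr0.
have [w [w_supp w_le]] := IH (ltnW kK).
have [xk [xk_ls xk_choice]] := run.2 k kK.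
have [t0 _] : exists t0, t0 \in supp x by apply/card_gt0P; rewrite card_supp_x (leq_ltn_trans _ kK).
have [t_new t_max] := xk_choice t0; set t := nth t0 T k in t_new t_max.
set r := y - Phi *m xk; pose e_t : 'cV[R]_m := Phi *m delta_mx t 0; set c := dot e_t r.
have r_le : norm2sq r <= norm2sq (y - Phi *m w).
  by apply: xk_ls.2 => i; rewrite inE; apply: w_supp.
have card_Tk : (#|[set i in take k T]| <= k)%N.
  by rewrite cardsE (leq_trans (card_size _)) // size_takel // run.1 ltnW.
have gain_le : a ^+ 2 * gain k <= c ^+ 2.
  rewrite /c -corrE; apply: max_corr_lb kK card_Tk xk_ls _ => i.
  by rewrite inE; apply: t_max.
have c2_le : (1 - s) * c ^+ 2 <= c ^+ 2 / (1 + delta).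
  by rewrite mulrC ler_wpM2l ?sqr_ge0.
exists (xk + (c / (1 + delta)) *: delta_mx t 0); split.
  move=> i; rewrite (take_nth t0) ?run.1 // mem_rcons in_cons negb_or => /andP[it ik].
  by rewrite !mxE xk_ls.1 ?inE // add0r (negbTE it) mulr0.
rewrite mulmxDr -scalemxAr opprD addrA -/r -/e_t.
have d1_gt0 : 0 < 1 + delta by have := delta_gt0; lra.
have := norm2sq_sub_dot_le r d1_gt0
  (norm2sq_Phi_delta_le t (leq_ltn_trans (leq0n k) kK)).
rewrite big_ord_recr /= -/c.
have : (1 - s) * (a ^+ 2 * gain k) <= (1 - s) * c ^+ 2 by apply: ler_wpM2l; have := s_lt1; lra.
lra.
Qed.

Lemma omp_false_discoveries_le : #|[set i in T] :\: supp x|%:R <= 20 * s * K%:R.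
Proof.
have [w [w_supp w_le]] := omp_residual_le (leqnn K).
rewrite -{1}run.1 take_size in w_supp.
set U := [set i in T].
have cardU : (#|U| <= K)%N by rewrite cardsE -run.1 card_size.
have w_supp' i : i \notin U -> w i 0 = 0 by rewrite inE; apply: w_supp.
have res_ge := residual_ge w_supp' cardU.
have y_le := norm2sq_y_le; have gain_ge := sum_gain_ge.
have false_le : (#|U :\: supp x| <= #|supp x :\: U|)%N.
  by rewrite !cardsD card_supp_x setIC leq_sub2r.
apply: le_trans (_ : #|supp x :\: U|%:R <= _); first by rewrite ler_nat.
have a2_gt0 : 0 < a ^+ 2 by rewrite exprn_gt0.
rewrite -(ler_pM2r a2_gt0).
have : (1 - s) * a ^+ 2 * (K%:R * (1 - 8 * s)) <= (1 - s) * a ^+ 2 * \sum_(j < K) gain j.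
  by apply: ler_wpM2l; rewrite // mulr_ge0 ?sqr_ge0 //; have := s_lt1; lra.
have := mulr_ge0 (mulr_ge0 (ltW s_gt0) (ltW s_gt0)) (mulr_ge0 (ler0n R K) (ltW a2_gt0)).
nra.
Qed.

End OMPSupportRecovery.

Theorem corollary1 (R : rcfType) :
  exists C : R, 0 < C /\
  forall (m n K : nat) (Phi : 'M[R]_(m, n)) (delta : R)
         (x : 'cV[R]_n) (v : 'cV[R]_m) (T : seq 'I_n),
    (1 <= K)%N ->
    is_isometry_const Phi (2 * K) delta ->
    0 < delta < 1 ->
    #|supp x| = K ->
    (forall i j, i \in supp x -> j \in supp x -> `|x i 0| = `|x j 0|) ->
    (delta * Num.sqrt delta)^-1 * norm2sq v <= norm2sq (Phi *m x) ->
    omp_run Phi (Phi *m x + v) K T ->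
    (#|[set i in T] :\: supp x|%:R / K%:R) <= C * Num.sqrt delta.
Proof.
exists 20; split=> [|m n K Phi delta x v T K_gt0 [_ [rip _]] /andP[d_gt0 d_lt1]
                     card_supp equal_abs snr run]; first by [].
have [i0 i0_supp] : exists i0, i0 \in supp x by apply/card_gt0P; rewrite card_supp.
have a_gt0 : 0 < `|x i0 0| by rewrite normr_gt0; move: i0_supp; rewrite inE.
have abs_x i : i \in supp x -> `|x i 0| = `|x i0 0| by move/equal_abs; apply.
rewrite ler_pdivrMr ?ltr0n //.
exact: (omp_false_discoveries_le rip d_gt0 d_lt1 a_gt0 card_supp abs_x snr run).
Qed.
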